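(* Assume the setting and standing assumptions described in the context. If for some $\Delta\in\mathcal{D}$ the function $\kappa\mapsto\det[-(B\Delta C+\kappa^2J_2+\kappa^4J_4)]$ is initially positive, then there exists $\tilde\kappa>0$ such that $\rho(\Delta,\kappa)<0$ for all $0<\kappa\le\tilde\kappa$.
   Context: Let $n,m\ge 1$, $B\in\mathbb{Z}^{n\times m}$, $C\in\mathbb{Z}^{m\times n}$. Given bounds $0\le \Delta_j^-\le \Delta_j^+<\infty$ ($j=1,\dots,m$), let $\mathcal{D}$ be the set of diagonal matrices $\Delta=\mathrm{diag}(\Delta_1,\dots,\Delta_m)$ with $\Delta_j^-\le\Delta_j\le\Delta_j^+$. Let $J_2,J_4\in\mathbb{R}^{n\times n}$ be symmetric, with $J_2$ indefinite, $J_4$ negative semidefinite, and such that there exists $\bar\kappa$ with $\bar\kappa^2J_2+\bar\kappa^4J_4$ negative definite. Assumption: for every $\Delta\in\mathcal{D}$, $B\Delta C$ is singular and has $n-1$ eigenvalues (with multiplicity) with negative real part, and there is a nonzero $v\ge0$ with $v^\top B=0$. For real $\kappa\ge0$, $\rho(\Delta,\kappa)$ denotes the spectral abscissa (maximum real part of the eigenvalues) of $B\Delta C+\kappa^2J_2+\kappa^4J_4$. A function $f$ on $[0,\infty)$ is initially positive if there is $\hat\kappa>0$ with $f(\kappa)>0$ for all $\kappa\in(0,\hat\kappa)$. *)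

From HB Require Import structures.
From mathcomp Require Import all_boot all_order all_algebra.
From mathcomp Require Import classical_sets reals.
From mathcomp Require Import complex.
Set Implicit Arguments. Unset Strict Implicit. Unset Printing Implicit Defensive.
Import Order.TTheory GRing.Theory Num.Theory.
Local Open Scope ring_scope.
Local Open Scope classical_set_scope.

Definition cmx (R : realType) (n : nat) (A : 'M[R]_n) : 'M[R[i]]_n :=
  map_mx (fun x => (x%:C)%C) A.

Definition eigenvalues (R : realType) (n : nat) (A : 'M[R]_n) : set R[i] :=
  [set z | root (char_poly (cmx A)) z].

Definition spectral_abscissa (R : realType) (n : nat) (A : 'M[R]_n) : R :=
  sup [set complex.Re z | z in eigenvalues A].

(* "A has n-1 eigenvalues (counted with algebraic multiplicity) with negative
    real part" *)
Definition neg_eigs_mult (R : realType) (n : nat) (A : 'M[R]_n) (k : nat) : Prop :=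
  exists s : seq R[i], size s = k /\ (forall z, z \in s -> complex.Re z < 0) /\
    (\prod_(z <- s) ('X - z%:P)) %| char_poly (cmx A).

Definition quad (R : realType) (n : nat) (J : 'M[R]_n) (x : 'cV[R]_n) : R :=
  (x^T *m J *m x) 0 0.

Definition indefinite (R : realType) (n : nat) (J : 'M[R]_n) : Prop :=
  (exists x, 0 < quad J x) /\ (exists y, quad J y < 0).
Definition neg_semidef (R : realType) (n : nat) (J : 'M[R]_n) : Prop :=
  forall x, quad J x <= 0.
Definition neg_def (R : realType) (n : nat) (J : 'M[R]_n) : Prop :=
  forall x, x != 0 -> quad J x < 0.

Definition intR (R : realType) (p q : nat) (M : 'M[int]_(p, q)) : 'M[R]_(p, q) :=
  map_mx (fun z => z%:~R) M.

Definition Mk (R : realType) (n m : nat) (B : 'M[int]_(n, m)) (C : 'M[int]_(m, n))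
  (d : 'rV[R]_m) (J2 J4 : 'M[R]_n) (k : R) : 'M[R]_n :=
  intR R B *m diag_mx d *m intR R C + (k ^+ 2) *: J2 + (k ^+ 4) *: J4.

Definition in_box (R : realType) (m : nat) (dm dp d : 'rV[R]_m) : Prop :=
  forall j, dm 0 j <= d 0 j <= dp 0 j.

Definition initially_positive (R : realType) (f : R -> R) : Prop :=
  exists kh, 0 < kh /\ forall k, 0 < k < kh -> 0 < f k.

From HB Require Import structures.
From mathcomp Require Import all_boot all_order all_algebra.
From mathcomp Require Import classical_sets reals.
From mathcomp Require Import complex polyrcf ring lra zify.
Import Order.TTheory GRing.Theory Num.Theory.
Local Open Scope ring_scope.

(* Let p_k be the characteristic polynomial of M_k = B Δ C + k^2 J2 + k^4 J4; its
   coefficients are polynomials in k, hence Lipschitz on [0, 1].  At k = 0 the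
   spectral assumption gives p_0 = x q(x) with all roots of q in the open left
   half-plane, so |q| is bounded below there and p_0'(0) = q(0) > 0.  A root z of
   p_k with Re z >= 0 therefore satisfies c |z| <= |p_0(z) - p_k(z)| = O(k).  For
   such small z, p_k(z) - p_k(w) = (z - w) (p_k'(0) + O(|z| + |w|)): taking w = conj z
   for nonreal z forces p_k'(0) to be small, and taking w = 0 for real z >= 0
   contradicts p_k(0) = det(-M_k) > 0. *)

Set Implicit Arguments. Unset Strict Implicit. Unset Printing Implicit Defensive.

Definition poly_norm1 (F : numDomainType) (p : {poly F}) : F :=
  \sum_(i < size p) `|p`_i|.

Section PolyNorm1.
Variable F : numDomainType.
Implicit Types (p : {poly F}) (x : F).

Lemma poly_norm1_ge0 p : 0 <= poly_norm1 p.
Proof. exact: sumr_ge0. Qed.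

Lemma poly_norm1_le p M : (forall i, `|p`_i| <= M) -> poly_norm1 p <= (size p)%:R * M.
Proof.
move=> pM; have -> : (size p)%:R * M = \sum_(i < size p) M.
  by rewrite sumr_const card_ord mulr_natl.
exact: ler_sum.
Qed.

Lemma norm_horner_le p x K : `|x| <= K -> 1 <= K -> `|p.[x]| <= poly_norm1 p * K ^+ size p.
Proof.
move=> xK K1; rewrite horner_coef /poly_norm1 mulr_suml.
apply: le_trans (ler_norm_sum _ _ _) _; apply: ler_sum => i _.
rewrite normrM normrX ler_wpM2l //.
apply: le_trans (ler_weXn2l K1 (ltnW (ltn_ord i))).
by apply: lerXn2r; rewrite // nnegrE (le_trans (normr_ge0 x)).
Qed.

Lemma norm_horner_sub0_le p x : `|x| <= 1 -> `|p.[x] - p.[0]| <= `|x| * poly_norm1 p.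
Proof.
move=> x1; rewrite !horner_coef -sumrB /poly_norm1 mulr_sumr.
apply: le_trans (ler_norm_sum _ _ _) _; apply: ler_sum => -[[|i] _] _ /=.
  by rewrite !expr0 subrr normr0 mulr_ge0.
rewrite expr0n mulr0 subr0 normrM normrX mulrC ler_wpM2r // exprS ler_piMr //.
exact: exprn_ile1.
Qed.

Lemma horner_sub_linear p z w r : `|z| <= r -> `|w| <= r -> r <= 1 ->
  exists2 E, p.[z] - p.[w] = (z - w) * (p`_1 + E)
           & `|E| <= r * (size p)%:R * poly_norm1 p.
Proof.
move=> zr wr r1; have r0 : 0 <= r := le_trans (normr_ge0 z) zr.
pose S i := \sum_(j < i) z ^+ (i.-1 - j) * w ^+ j.
have coef1E : \sum_(i < size p) p`_i * (i == 1%N :> nat)%:R = p`_1.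
  rewrite -[p in RHS]coefK poly_def coef_sum; apply: eq_bigr => i _.
  by rewrite coefZ coefXn eq_sym.
have S_near1 (i : 'I_(size p)) : `|S i - (i == 1%N :> nat)%:R| <= r * (size p)%:R.
  case: i => -[|[|i]] ip /=.
  - by rewrite /S big_ord0 subr0 normr0 mulr_ge0.
  - by rewrite /S big_ord1 !expr0 mulr1 subrr normr0 mulr_ge0.
  apply: le_trans (_ : \sum_(j < i.+2) r <= _); last first.
    by rewrite sumr_const card_ord mulr_natr ler_wpMn2l // ltnW.
  rewrite subr0; apply: le_trans (ler_norm_sum _ _ _) _; apply: ler_sum => j _.
  rewrite normrM !normrX; apply: le_trans (_ : r ^+ (i.+1 - j) * r ^+ j <= _).
    by apply: ler_pM; rewrite ?exprn_ge0 // lerXn2r // nnegrE.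
  rewrite -exprD subnK; last by rewrite -ltnS.
  by rewrite exprS ler_piMr // exprn_ile1.
exists (\sum_(i < size p) p`_i * (S i - (i == 1%N :> nat)%:R)).
  under eq_bigr do rewrite mulrBr.
  rewrite sumrB coef1E [p`_1 + _]addrC subrK !horner_coef -sumrB mulr_sumr.
  by apply: eq_bigr => i _; rewrite -mulrBr subrXX mulrCA.
rewrite mulrC /poly_norm1 mulr_suml; apply: le_trans (ler_norm_sum _ _ _) _.
by apply: ler_sum => i _; rewrite normrM ler_wpM2l.
Qed.

End PolyNorm1.

Lemma norm_root_le_poly_norm1 (F : numFieldType) (p : {poly F}) x :
  p \is monic -> root p x -> `|x| <= poly_norm1 p.
Proof.
move=> mp /eqP px; have p0 : p != 0 := monic_neq0 mp.
pose n := (size p).-1; pose S := \sum_(i < n) `|p`_i|.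
have lc : p`_n = 1 by rewrite /n -lead_coefE (monicP mp).
have pxE : p.[x] = \sum_(i < n) p`_i * x ^+ i + x ^+ n.
  by rewrite horner_coef polySpred // big_ord_recr /= -/n lc mul1r.
have n0 : (0 < n)%N.
  rewrite lt0n; apply/negP => /eqP n0; move: px.
  by rewrite pxE n0 big_ord0 add0r expr0 => /eqP; rewrite oner_eq0.
have -> : poly_norm1 p = S + 1.
  by rewrite /poly_norm1 polySpred // big_ord_recr /= -/n lc normr1.
have [x1|x1] := real_leP (normr_real x) (@real1 F).
  by rewrite (le_trans x1) // lerDr sumr_ge0.
apply: le_trans (_ : S <= S + 1); last by rewrite lerDl.
have x0 : 0 < `|x| := lt_trans ltr01 x1.
have xn : `|x| ^+ n <= S * `|x| ^+ n.-1.
  move: px; rewrite pxE => /(canRL (addrK _)); rewrite sub0r.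
  move=> /(congr1 Num.norm); rewrite normrN normrX => <-.
  apply: le_trans (ler_norm_sum _ _ _) _; rewrite /S mulr_suml; apply: ler_sum => i _.
  rewrite normrM normrX ler_wpM2l // ler_weXn2l ?ltW // -ltnS prednK //.
by move: xn; rewrite -[in X in X <= _](prednK n0) exprS ler_pM2r // exprn_gt0.
Qed.

Definition coef_eval (R : comNzRingType) (P : {poly {poly R}}) (k : R) : {poly R} :=
  map_poly (horner_eval k) P.

Lemma coef_coef_eval (R : comNzRingType) (P : {poly {poly R}}) k i :
  (coef_eval P k)`_i = (P`_i).[k].
Proof. by rewrite coef_map. Qed.

Lemma size_coef_eval (R : comNzRingType) (P : {poly {poly R}}) k :
  (size (coef_eval P k) <= size P)%N.
Proof. exact: size_poly. Qed.

Section RealClosed.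
Variable R : rcfType.
Local Notation toC := (map_poly (real_complex R)).
Local Open Scope complex_scope.

Lemma normc_real (x : R) : `|x%:C| = `|x|%:C.
Proof. by rewrite normc_def /= expr0n /= addr0 sqrtr_sqr. Qed.

Lemma poly_norm1_complex (p : {poly R}) : poly_norm1 (toC p) = (poly_norm1 p)%:C.
Proof.
rewrite /poly_norm1 size_map_poly rmorph_sum; apply: eq_bigr => i _.
by rewrite coef_map normc_real.
Qed.

Lemma prod_XsubC_bounded_below (s : seq R[i]) :
  (forall y, y \in s -> complex.Re y < 0) ->
  exists2 c : R, 0 < c & forall z, 0 <= complex.Re z ->
    c%:C <= `|(\prod_(y <- s) ('X - y%:P)).[z]|.
Proof.
move=> s_stable; exists (\prod_(y <- s) - complex.Re y).
  by rewrite big_seq prodr_gt0 // => y ys; rewrite oppr_gt0 s_stable.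
move=> z Rez; rewrite horner_prod normr_prod rmorph_prod !big_seq.
apply: ler_prod => y ys; rewrite hornerXsubC ler0c oppr_ge0 ltW ?s_stable //=.
apply: le_trans (normc_ge_Re _); rewrite lecR raddfB /=.
have := ler_norm (complex.Re z - complex.Re y); lra.
Qed.

Lemma monic_horner0_gt0 (q : {poly R}) :
  q \is monic -> (forall x, 0 <= x -> ~~ root q x) -> 0 < q.[0].
Proof.
move=> mq noroot; rewrite ltNge; apply/negP => q0.
have [b qb] : exists b, forall x, b <= x -> lead_coef q <= q.[x].
  by apply: poly_pinfty_gt_lc; rewrite (monicP mq) ltr01.
have b0 : 0 <= Num.max 0 b by rewrite le_max lexx.
have q_ge0 : 0 <= q.[Num.max 0 b].
  by rewrite (le_trans _ (qb _ _)) ?(monicP mq) ?ler01 // le_max lexx orbT.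
have [x /andP[x0 _] qx] := poly_ivt b0 (introT andP (conj q0 q_ge0)).
by move: (noroot x x0); rewrite qx.
Qed.

Lemma coef1_gt0 (p : {poly R}) (s : seq R[i]) :
  p \is monic -> (forall y, y \in s -> complex.Re y < 0) ->
  toC p = 'X * \prod_(y <- s) ('X - y%:P) -> 0 < p`_1.
Proof.
move=> mp s_stable pE.
have [c c0 Qc] := prod_XsubC_bounded_below s_stable.
have p0 : root p 0.
  by rewrite -(fmorph_root (real_complex R)) rmorph0 pE /root hornerM hornerX mul0r.
have [q pq] := factor_theorem _ _ p0; rewrite polyC0 subr0 in pq.
have qE : toC q = \prod_(y <- s) ('X - y%:P).
  apply: (@mulIf _ 'X); rewrite ?polyX_eq0 //.
  by rewrite [RHS]mulrC -pE pq rmorphM /= map_polyX.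
rewrite pq coefMX /= -horner_coef0; apply: monic_horner0_gt0.
  by move: mp; rewrite pq monicMr ?monicX.
move=> x x0; rewrite -(fmorph_root (real_complex R)) qE /root -normr_eq0.
by rewrite gt_eqF // (lt_le_trans _ (Qc _ _)) ?ltcR.
Qed.

Lemma no_root_in_small_right_half_disc (p : {poly R}) (r : R) (z : R[i]) :
  0 < p.[0] -> r <= 1 -> r * (size p)%:R * poly_norm1 p < p`_1 ->
  `|z| <= r%:C -> 0 <= complex.Re z -> ~~ root (toC p) z.
Proof.
move=> p0_gt0 r1 small zr Rez; apply/negP => rz.
set eps := r * _ * _ in small.
have r0 : 0 <= r by rewrite -lecR (le_trans (normr_ge0 z)).
have eps0 : 0 <= eps by rewrite !mulr_ge0 ?poly_norm1_ge0.
have [Imz0|Imz] := eqVneq (complex.Im z) 0.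
  have zE : z = (complex.Re z)%:C by case: z Imz0 {rz zr Rez} => a b /= ->.
  have px : root p (complex.Re z).
    by move: rz; rewrite zE -[_%:C]/(real_complex R _) fmorph_root.
  have xr : `|complex.Re z| <= r by rewrite -lecR -normc_real -zE.
  have zero_r : `|0 : R| <= r by rewrite normr0.
  have [E pE Eeps] := horner_sub_linear p xr zero_r r1.
  move: pE; rewrite (eqP px) sub0r subr0 => pE.
  have Epos : 0 < p`_1 + E by move: Eeps; rewrite -/eps => /ler_normlP[]; lra.
  by have := mulr_ge0 Rez (ltW Epos); lra.
pose w := z^*.
have rw : root (toC p) w.
  rewrite -complex_root_conj -map_poly_comp (eq_map_poly (fun y => conjc_real y)) //.
have wr : `|w| <= r%:C by rewrite normcJ.
have r1C : r%:C <= 1 by rewrite lecR.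
have [E pE Eeps] := horner_sub_linear (toC p) zr wr r1C.
have zw : z != w.
  by apply: contra_neq Imz => /(congr1 (@complex.Im R)); rewrite /w; case: (z) => a b /=; lra.
move: pE; rewrite (eqP rz) (eqP rw) subrr => /esym /eqP.
rewrite mulf_eq0 subr_eq0 (negbTE zw) /= addr_eq0 => /eqP E_p1.
move: Eeps; rewrite -normrN -E_p1 coef_map /= normc_real size_map_poly poly_norm1_complex.
rewrite -(rmorph_nat (real_complex R)) -!rmorphM lecR -/eps; have := ler_norm (p`_1); lra.
Qed.

Section SmallParameter.
Variables (P : {poly {poly R}}) (s : seq R[i]).
Hypothesis monic_P : forall k, coef_eval P k \is monic.
Hypothesis s_stable : forall y, y \in s -> complex.Re y < 0.
Hypothesis P0E : toC (coef_eval P 0) = 'X * \prod_(y <- s) ('X - y%:P).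
Local Notation p := (coef_eval P).
Local Notation N := (size P).

Lemma coef_eval_bounds : exists2 L, 0 <= L & forall k i, 0 <= k <= 1 ->
  `|(p k)`_i| <= L /\ `|(p k)`_i - (p 0)`_i| <= k * L.
Proof.
have L0 : 0 <= \sum_(i < N) poly_norm1 P`_i.
  by rewrite sumr_ge0 // => i _; apply: poly_norm1_ge0.
exists (\sum_(i < N) poly_norm1 P`_i) => // k i /andP[k0 k1]; rewrite !coef_coef_eval.
have k1' : `|k| <= 1 by rewrite ger0_norm.
have normL : poly_norm1 P`_i <= \sum_(i < N) poly_norm1 P`_i.
  have [iN|iN] := ltnP i N; last first.
    by rewrite nth_default // /poly_norm1 size_poly0 big_ord0 L0.
  by rewrite (bigD1 (Ordinal iN)) //= lerDl sumr_ge0 // => j _; apply: poly_norm1_ge0.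
split.
  by apply: le_trans (norm_horner_le _ k1' (lexx 1)) _; rewrite expr1n mulr1.
rewrite -{2}(ger0_norm k0); apply: le_trans (norm_horner_sub0_le _ k1') _.
by rewrite ler_wpM2l.
Qed.

Lemma coef_eval_roots_bounded : exists2 K, 1 <= K & forall k z, 0 <= k <= 1 ->
  root (toC (p k)) z -> `|z| <= K%:C.
Proof.
have [L L0 pL] := coef_eval_bounds.
exists (1 + N%:R * L) => [|k z k01 rz]; first by rewrite lerDl mulr_ge0.
apply: le_trans (norm_root_le_poly_norm1 (monic_map _ (monic_P k)) rz) _.
rewrite poly_norm1_complex lecR.
apply: le_trans (poly_norm1_le (fun i => (pL k i k01).1)) _.
by rewrite ler_wpDl // ler_wpM2r // ler_nat size_coef_eval.
Qed.

Lemma coef_eval_unstable_roots_small : exists2 G, 0 <= G & forall k z, 0 <= k <= 1 ->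
  root (toC (p k)) z -> 0 <= complex.Re z -> `|z| <= (k * G)%:C.
Proof.
have [L L0 pL] := coef_eval_bounds.
have [K K1 zK] := coef_eval_roots_bounded.
have [c c0 Qc] := prod_XsubC_bounded_below s_stable.
have K0 : 0 <= K by rewrite (le_trans ler01).
exists (N%:R * L * K ^+ N / c) => [|k z k01 rz Rez].
  by rewrite divr_ge0 ?mulr_ge0 ?exprn_ge0 ?ler0n // ltW.
have k0 : 0 <= k by case/andP: k01.
have size_diff : (size (p 0 - p k)%R <= N)%N.
  by rewrite (leq_trans (size_add _ _)) // size_polyN geq_max !size_coef_eval.
have diff_small : `|(toC (p 0 - p k)).[z]| <= (k * (N%:R * L * K ^+ N))%:C.
  have K1C : 1 <= K%:C by rewrite lecR.
  apply: le_trans (norm_horner_le _ (zK k z k01 rz) K1C) _.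
  rewrite poly_norm1_complex size_map_poly -rmorphXn -rmorphM lecR.
  have -> : k * (N%:R * L * K ^+ N) = N%:R * (k * L) * K ^+ N by ring.
  apply: ler_pM; rewrite ?poly_norm1_ge0 ?exprn_ge0 ?ler_weXn2l //.
  apply: le_trans (poly_norm1_le (M := k * L) _) _.
    by move=> i; rewrite coefB distrC; exact: (pL k i k01).2.
  by rewrite ler_wpM2r ?mulr_ge0 ?ler_nat.
have z_lower : `|z| * c%:C <= `|(toC (p 0 - p k)).[z]|.
  rewrite rmorphB /= hornerD hornerN (eqP rz) subr0 P0E hornerM hornerX normrM.
  by rewrite ler_wpM2l ?Qc.
by rewrite mulrA fmorph_div ler_pdivlMr ?ltcR // (le_trans z_lower).
Qed.

Lemma coef_eval_stable_near0 (kh : R) : 0 < kh ->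
  (forall k, 0 < k < kh -> 0 < (p k).[0]) ->
  exists2 kt, 0 < kt & forall k z, 0 < k <= kt ->
    root (toC (p k)) z -> complex.Re z < 0.
Proof.
move=> kh0 p_pos.
have [L L0 pL] := coef_eval_bounds.
have [G G0 zG] := coef_eval_unstable_roots_small.
have a0 : 0 < (p 0)`_1 := coef1_gt0 (monic_P 0) s_stable P0E.
(* k D <= min 1 a gives k <= 1, k G <= 1 and k (G N^2 L + L) < a, the smallness
   conditions of no_root_in_small_right_half_disc at r = k G. *)
pose D := 1 + G + L + G * (N%:R * (N%:R * L)).
have D1 : 1 <= D by rewrite /D -!addrA lerDl !addr_ge0 ?mulr_ge0 ?ler0n.
have D0 : 0 < D := lt_le_trans ltr01 D1.
exists (Num.min (kh / 2) ((Num.min 1 (p 0)`_1) / D)) => [|k z].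
  by rewrite lt_min !divr_gt0 // lt_min ltr01.
move=> /andP[k0]; rewrite le_min => /andP[kkh].
rewrite ler_pdivlMr // le_min => /andP[kD1 kDa] rz.
have k0' : 0 <= k := ltW k0.
rewrite ltNge; apply/negP => Rez.
have k01 : 0 <= k <= 1 by rewrite ltW //= (le_trans _ kD1) // ler_peMr // ltW.
have kGNNL_ge0 : 0 <= k * G * (N%:R * (N%:R * L)) by rewrite !mulr_ge0 ?ler0n.
have kDE : k * D = k + k * G + k * L + k * G * (N%:R * (N%:R * L)) by rewrite /D; ring.
have [_ pk1_near] := pL k 1%N k01.
have z_small := zG k z k01 rz Rez.
apply/negP: rz; apply: no_root_in_small_right_half_disc z_small Rez.
- by apply: p_pos; rewrite k0 (le_lt_trans kkh) // ltr_pdivrMr // ltr_pMr // ltr1n.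
- by apply: le_trans kD1; rewrite kDE; have := mulr_ge0 k0' L0; lra.
- apply: le_lt_trans (_ : k * G * (N%:R * (N%:R * L)) < _).
    rewrite -mulrA ler_wpM2l ?mulr_ge0 //.
    apply: ler_pM; rewrite ?ler0n ?poly_norm1_ge0 ?ler_nat ?size_coef_eval //.
    apply: le_trans (poly_norm1_le (fun i => (pL k i k01).1)) _.
    by rewrite ler_wpM2r ?ler_nat ?size_coef_eval.
  move: pk1_near => /ler_normlP[]; rewrite kDE in kDa; have := mulr_ge0 k0' G0; lra.
Qed.

End SmallParameter.

End RealClosed.

Lemma char_poly_horner0 (R : comNzRingType) n (A : 'M[R]_n) :
  (char_poly A).[0] = \det (- A).
Proof. by rewrite horner_coef0 char_poly_det -scaleN1r detZ. Qed.

Lemma monic_dvdp_sizeS (F : fieldType) (p q : {poly F}) x :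
  p \is monic -> q \is monic -> size p = (size q).+1 -> q %| p ->
  root p x -> ~~ root q x -> p = ('X - x%:P) * q.
Proof.
move=> mp mq sp /dvdpP[r pE] px qx.
have mr : r \is monic by move: mp; rewrite pE monicMr.
have sr : size r = 2.
  move: sp; rewrite pE size_monicM ?monic_neq0 //.
  by have := size_poly_gt0 q; rewrite monic_neq0 //; lia.
have rx : root r x by move: px; rewrite pE rootM (negbTE qx) orbF.
rewrite pE; congr (_ * _); apply/esym/eqP.
rewrite -eqp_monic ?monicXsubC // -dvdp_size_eqp ?size_XsubC ?sr //.
by rewrite dvdp_XsubCl.
Qed.

Lemma sup_Re_roots_lt0 (R : realType) (p : {poly R[i]}) : (1 < size p)%N ->
  (forall z, root p z -> complex.Re z < 0) ->
  sup [set complex.Re z | z in [set z | root p z]] < 0.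
Proof.
move=> sp p_stable; have [r pE] := closed_field_poly_normal p.
have rootE z : root p z = (z \in r).
  by rewrite pE rootZ ?root_prod_XsubC // lead_coef_eq0 -size_poly_gt0 ltnW.
pose b := \big[Num.max/-1]_(z <- r) complex.Re z.
have b0 : b < 0.
  by rewrite /b big_seq bigmax_lt ?ltrN10 // => z; rewrite -rootE; apply: p_stable.
apply: le_lt_trans b0; apply: ge_sup.
  case: r pE rootE {b} => [|y r] pE rootE.
    by move: sp; rewrite pE big_nil alg_polyC size_polyC; case: (_ != _).
  by exists (complex.Re y), y => //=; rewrite rootE mem_head.
by move=> _ [z /= pz <-]; rewrite /b le_bigmax_seq // -rootE.
Qed.

Theorem lemma2 (R : realType) (n m : nat) (B : 'M[int]_(n, m)) (C : 'M[int]_(m, n))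
  (dm dp : 'rV[R]_m) (J2 J4 : 'M[R]_n) :
  (0 < n)%N -> (0 < m)%N ->
  (forall j, 0 <= dm 0 j <= dp 0 j) ->
  J2^T = J2 -> J4^T = J4 ->
  indefinite J2 -> neg_semidef J4 ->
  (exists kb : R, neg_def (kb ^+ 2 *: J2 + kb ^+ 4 *: J4)) ->
  (forall d : 'rV[R]_m, in_box dm dp d ->
     \det (intR R B *m diag_mx d *m intR R C) = 0 /\
     neg_eigs_mult (intR R B *m diag_mx d *m intR R C) n.-1) ->
  (exists v : 'cV[R]_n, v != 0 /\ (forall i, 0 <= v i 0) /\ v^T *m intR R B = 0) ->
  forall d : 'rV[R]_m, in_box dm dp d ->
    initially_positive (fun k : R => \det (- Mk B C d J2 J4 k)) ->
    exists kt : R, 0 < kt /\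
      forall k : R, 0 < k <= kt -> spectral_abscissa (Mk B C d J2 J4 k) < 0.
Proof.
move=> n0 _ _ _ _ _ _ _ spectrum _ d dbox [kh [kh0 det_pos]].
have [detA0 [s [size_s [s_stable s_dvd]]]] := spectrum d dbox.
set A0 := intR R B *m diag_mx d *m intR R C in detA0 s_dvd.
pose Mx := map_mx polyC A0 + 'X^2 *: map_mx polyC J2 + 'X^4 *: map_mx polyC J4.
have MxE k : coef_eval (char_poly Mx) k = char_poly (Mk B C d J2 J4 k).
  rewrite /coef_eval map_char_poly; congr char_poly; apply/matrixP => i j.
  by rewrite /Mk !mxE /= !horner_evalE !hornerE.
have charC (M : 'M[R]_n) : char_poly (cmx M) = map_poly (real_complex R) (char_poly M).
  by rewrite map_char_poly.
have Mk0 : Mk B C d J2 J4 0 = A0 by rewrite /Mk expr0n scale0r addr0 expr0n scale0r addr0.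
have P0E : map_poly (real_complex R) (coef_eval (char_poly Mx) 0) =
           'X * \prod_(y <- s) ('X - y%:P).
  rewrite MxE Mk0 -charC -[X in X * _]subr0 -polyC0.
  apply: monic_dvdp_sizeS; rewrite ?char_poly_monic ?monic_prod_XsubC //.
  - by rewrite size_char_poly size_prod_XsubC size_s prednK.
  - by rewrite charC -(rmorph0 (real_complex R)) fmorph_root /root char_poly_horner0
      -scaleN1r detZ detA0 mulr0.
  - by rewrite root_prod_XsubC; apply/negP => /s_stable; rewrite ltxx.
have monic_P k : coef_eval (char_poly Mx) k \is monic by rewrite MxE char_poly_monic.
have P_pos k : 0 < k < kh -> 0 < (coef_eval (char_poly Mx) k).[0].
  by rewrite MxE char_poly_horner0; apply: det_pos.
have [kt kt0 stable] := coef_eval_stable_near0 monic_P s_stable P0E kh0 P_pos.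
exists kt; split => // k hk.
rewrite /spectral_abscissa /eigenvalues charC -MxE; apply: sup_Re_roots_lt0 => [|z].
  by rewrite size_map_poly MxE size_char_poly ltnS.
exact: stable.
Qed.
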